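(* Let $\{(F_j,d_j)\}_{j\ge 1}$ be a countable collection of metric spaces with labelled presentations $\mathcal F^j$ (with common alphabet $\{1,\dots,m\}$, $m\ge 2$) as described in the context. If $\mathcal F=\bigcup_{j\ge1}\mathcal F^j$ is a modular chaotic structure for $F=\bigcup_{j\ge1}F_j$, then the map $\varPhi$ is modular chaotic in the sense of Devaney, i.e. the modular similarity map $\varphi$ is modular-transitive, its modular-periodic points are modular-dense, and it is modular-sensitive.
   Context: Setting. Let $(F_j,d_j)$, $j=1,2,\ldots$, be metric spaces and $m\ge 2$ a natural number. For each $j$ there is a presentation $\mathcal F^j=\{\mathcal F^j_{i_1i_2\ldots i_n\ldots}: i_k\in\{1,\dots,m\},\ k=1,2,\ldots\}$: every infinite sequence $i_1i_2\ldots$ over $\{1,\dots,m\}$ labels an element of $F_j$, and every element of $F_j$ has at least one such label (labels need not be unique). Put $\delta_j(\mathcal F^j_{i_1i_2\ldots},\mathcal F^j_{j_1j_2\ldots})=d_j(f_1,f_2)$ when the two labels correspond to $f_1,f_2\in F_j$ (so different labels of the same point have $\delta_j=0$); write $\delta$ for $\delta_j$ on $\mathcal F^j$. For fixed $i_1,\dots,i_n$ let $\mathcal F^j_{i_1\ldots i_n}=\bigcup_{j_k\in\{1,\dots,m\}}\mathcal F^j_{i_1\ldots i_nj_1j_2\ldots}$. For $A,B\subseteq\mathcal F^j$: $\mathrm{diam}(A)=\sup\{\delta_j(x,y):x,y\in A\}$, $\delta_j(A,B)=\inf\{\delta_j(x,y):x\in A,y\in B\}$. Diameter condition for $j$: $\max_{i_1\ldots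 i_n}\mathrm{diam}(\mathcal F^j_{i_1\ldots i_n})\to0$ as $n\to\infty$. Separation condition for $j$: there exist $\varepsilon_0^j>0$ and a natural $n=n(j)$ such that for any indices $i_1\ldots i_n$ there exist indices $j_1\ldots j_n$ with $\delta_j(\mathcal F^j_{i_1\ldots i_n},\mathcal F^j_{j_1\ldots j_n})\ge\varepsilon_0^j$. $\mathcal F=\bigcup_j\mathcal F^j$ is a modular chaotic structure for $F=\bigcup_jF_j$ if the diameter condition holds for every $j$, the separation condition holds for every $j$, and $\varepsilon_0=\inf_j\varepsilon_0^j>0$. Maps. The modular similarity map $\varphi$ on $\mathcal F$ is given by $\varphi(\mathcal F^j_{i_1i_2i_3\ldots})=\mathcal F^{j+1}_{i_2i_3\ldots}$, $j\ge1$. The (multivalued) map $\varPhi:F\to F$ sends $f\in F_j$ to the set of all points of $F_{j+1}$ labelled by $\varphi(\mathcal F^j_{i_1i_2\ldots})$ where $i_1i_2\ldots$ ranges over all labels of $f$. $\varPhi$ is called modular chaotic in a given sense if $\varphi$ is. Neighborhoods. $\mathcal F^j_{i_1i_2\ldots}$ is in the $(k,l)$-neighborhood of $\mathcal F^p_{s_1s_2\ldots}$ ($j<p$) if $j+k=p$ and $i_{k+1}=s_1,\dots,i_{k+l}=s_l$. A point $\mathcal F^j_{i_1i_2\ldots}$ is periodic with period $p$ if its lower index is an endless repetition of a block of $p$ terms (modular-periodic). Modular-transitivity: there is a lower index $i_1i_2\ldots$ such that for any sequence $s_1s_2\ldots$ and naturals $j,l$ there exist positive integers $m'$ and $k>j$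 such that $\mathcal F^j_{i_1i_2\ldots}$ is in the $(m',l)$-neighborhood of $\mathcal F^k_{s_1s_2\ldots}$. Modular-density of periodic points: for any point $\mathcal F^k_{s_1s_2\ldots}$ and naturals $l$ and $m'\le k$ there is a periodic point $\mathcal F^{m'}_{i_1i_2\ldots}$ in the $(k-m',l)$-neighborhood of $\mathcal F^k_{s_1s_2\ldots}$. Modular-sensitivity: there is $\varepsilon_0>0$ such that for each $x=\mathcal F^j_{i_1i_2\ldots}$ and each $\kappa>0$ there exist $y=\mathcal F^j_{j_1j_2\ldots}$ and a natural $k$ with $\delta(x,y)<\kappa$ and $\delta(\varphi^k(x),\varphi^k(y))>\varepsilon_0$. Modular Devaney chaos: $\varphi$ is modular-transitive, modular-sensitive, and its modular-periodic points are modular-dense. *)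

From Stdlib Require Import Reals.
Open Scope R_scope.

(* The alphabet {1,...,m} is represented by {0,...,m-1}. *)
Definition digit (m : nat) := {k : nat | (k < m)%nat}.

(* An infinite lower index i_1 i_2 ... ; position t (0-based) holds i_{t+1}. *)
Definition lab_seq (m : nat) := nat -> digit m.

(* A point F^j_{i_1 i_2 ...} of the modular structure: (j, i). *)
Definition point (m : nat) := (nat * lab_seq m)%type.

Definition is_metric {X : Type} (d : X -> X -> R) : Prop :=
  (forall x y, 0 <= d x y) /\
  (forall x y, d x y = 0 <-> x = y) /\
  (forall x y, d x y = d y x) /\
  (forall x y z, d x z <= d x y + d y z).

Definition is_presentation {X : Type} {m : nat} (lab : lab_seq m -> X) : Prop :=
  forall x : X, exists s, lab s = x.

Definition delta {m : nat} (F : nat -> Type) (d : forall j, F j -> F j -> R)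
  (lab : forall j, lab_seq m -> F j) (j : nat) (a b : lab_seq m) : R :=
  d j (lab j a) (lab j b).

(* b lies in the cylinder F^j_{w_1...w_n}  iff  agree n w b *)
Definition agree {m : nat} (n : nat) (a b : lab_seq m) : Prop :=
  forall t, (t < n)%nat -> a t = b t.

Section Conds.
Context {m : nat} (dl : nat -> lab_seq m -> lab_seq m -> R).

Definition diameter_condition (j : nat) : Prop :=
  forall eps, 0 < eps -> exists N, forall n, (N <= n)%nat ->
    forall w a b : lab_seq m, agree n w a -> agree n w b -> dl j a b <= eps.

Definition separation_condition (j : nat) (eps0 : R) : Prop :=
  exists n : nat, forall w : lab_seq m, exists w' : lab_seq m,
    forall a b : lab_seq m, agree n w a -> agree n w' b -> eps0 <= dl j a b.

Definition modular_chaotic_structure : Prop :=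
  (forall j, (1 <= j)%nat -> diameter_condition j) /\
  exists eps0 : nat -> R,
    (forall j, (1 <= j)%nat -> 0 < eps0 j /\ separation_condition j (eps0 j)) /\
    exists c, 0 < c /\ forall j, (1 <= j)%nat -> c <= eps0 j.

Definition pdelta (x y : point m) : R := dl (fst x) (snd x) (snd y).

End Conds.

Definition phi {m : nat} (x : point m) : point m :=
  (S (fst x), fun n => snd x (S n)).

Definition in_nbhd {m : nat} (x y : point m) (k l : nat) : Prop :=
  (fst x + k)%nat = fst y /\
  forall t, (t < l)%nat -> snd x (k + t)%nat = snd y t.

Definition periodic_point {m : nat} (x : point m) : Prop :=
  exists p, (0 < p)%nat /\ forall n, snd x (n + p)%nat = snd x n.

Definition modular_transitive (m : nat) : Prop :=
  exists i : lab_seq m, forall (s : lab_seq m) (j l : nat), (1 <= j)%nat ->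
    exists m' k, (0 < m')%nat /\ (j < k)%nat /\ in_nbhd (j, i) (k, s) m' l.

Definition modular_dense_periodic (m : nat) : Prop :=
  forall (k : nat) (s : lab_seq m) (l m' : nat), (1 <= m')%nat -> (m' <= k)%nat ->
    exists i : lab_seq m, periodic_point (m', i) /\ in_nbhd (m', i) (k, s) (k - m') l.

Definition modular_sensitive {m : nat} (dl : nat -> lab_seq m -> lab_seq m -> R) : Prop :=
  exists eps0, 0 < eps0 /\
    forall (j : nat) (i : lab_seq m) (kappa : R), (1 <= j)%nat -> 0 < kappa ->
      exists (i' : lab_seq m) (k : nat), (1 <= k)%nat /\
        pdelta dl (j, i) (j, i') < kappa /\
        pdelta dl (Nat.iter k phi (j, i)) (Nat.iter k phi (j, i')) > eps0.

Definition modular_Devaney_chaotic (m : nat) (dl : nat -> lab_seq m -> lab_seq m -> R) : Prop :=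
  modular_transitive m /\ modular_dense_periodic m /\ modular_sensitive dl.

(** Transitivity: the concatenation of the base-[m] expansions of all natural
    numbers is a label in which every finite word occurs, so a single point
    visits every [(k, l)]-neighbourhood.  Density of periodic points: repeat
    the first [k - m' + l] letters of the target label.  Sensitivity: by the
    diameter condition, replacing the tail of a label after a long enough prefix
    moves the point by less than [kappa]; by the separation condition at the
    later level that tail can be chosen so that the shifted points are at least
    [inf_j eps0^j] apart. *)

From Stdlib Require Import Reals.
From Stdlib Require Import Arith Lia Lra List FunctionalExtensionality.
Open Scope R_scope.

Section BaseExpansion.
Variable m : nat.
Hypothesis m_neq0 : m <> 0%nat.

Fixpoint base_code (w : nat -> nat) (l : nat) : nat :=
  match l with
  | O => O
  | S l' => (w O + m * base_code (fun n => w (S n)) l')%nat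
  end.

Definition base_digit (c t : nat) : nat := ((c / m ^ t) mod m)%nat.

Lemma base_digit_code (l : nat) (w : nat -> nat) (q t : nat) :
  (forall u, w u < m)%nat -> (t < l)%nat ->
  base_digit (base_code w l + m ^ l * q) t = w t.
Proof.
  revert w q t; induction l as [|l IH]; intros w q t w_lt t_lt; [lia|].
  unfold base_digit in *; cbn [base_code].
  replace (w O + m * base_code (fun n => w (S n)) l + m ^ S l * q)%nat
    with (w O + (base_code (fun n => w (S n)) l + m ^ l * q) * m)%nat
    by (simpl; ring).
  destruct t as [|t].
  - rewrite Nat.pow_0_r, Nat.div_1_r, Nat.Div0.mod_add.
    apply Nat.mod_small, w_lt.
  - rewrite Nat.pow_succ_r', <- Nat.Div0.div_div, Nat.div_add by exact m_neq0.
    rewrite (Nat.div_small (w O) m) by apply w_lt.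
    apply (IH (fun n => w (S n))); [intro; apply w_lt | lia].
Qed.

End BaseExpansion.

Section InfiniteConcatenation.
Context {A : Type} (a0 : A) (block : nat -> list A).
Hypothesis block_nonnil : forall b, block b <> nil.

Fixpoint blocks_upto (k : nat) : list A :=
  match k with O => nil | S k' => blocks_upto k' ++ block k' end.

Definition concat_blocks (n : nat) : A := nth n (blocks_upto (S n)) a0.

Lemma length_blocks_upto_ge (k : nat) : (k <= length (blocks_upto k))%nat.
Proof.
  induction k as [|k IH]; cbn [blocks_upto]; [lia|].
  rewrite length_app.
  destruct (block k) eqn:E; [now destruct (block_nonnil k)|]; simpl; lia.
Qed.

Lemma blocks_upto_prefix (k1 k2 : nat) :
  (k1 <= k2)%nat -> exists r, blocks_upto k2 = blocks_upto k1 ++ r.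
Proof.
  induction 1 as [|k2 _ [r Er]].
  - exists nil; now rewrite app_nil_r.
  - exists (r ++ block k2); cbn [blocks_upto]; now rewrite Er, app_assoc.
Qed.

Lemma nth_blocks_upto (k1 k2 n : nat) :
  (n < length (blocks_upto k1))%nat -> (n < length (blocks_upto k2))%nat ->
  nth n (blocks_upto k1) a0 = nth n (blocks_upto k2) a0.
Proof.
  intros n_lt1 n_lt2; destruct (Nat.le_ge_cases k1 k2) as [le12|le21].
  - destruct (blocks_upto_prefix _ _ le12) as [r ->]; now rewrite app_nth1.
  - destruct (blocks_upto_prefix _ _ le21) as [r ->]; now rewrite app_nth1.
Qed.

Lemma concat_blocks_block (b t : nat) : (t < length (block b))%nat ->
  concat_blocks (length (blocks_upto b) + t) = nth t (block b) a0.
Proof.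
  intros t_lt; unfold concat_blocks.
  rewrite (nth_blocks_upto _ (S b)).
  - cbn [blocks_upto]; rewrite app_nth2 by lia; f_equal; lia.
  - pose proof (length_blocks_upto_ge (S (length (blocks_upto b) + t))); lia.
  - cbn [blocks_upto]; rewrite length_app; lia.
Qed.

End InfiniteConcatenation.

Definition universal_seq (m : nat) : nat -> nat :=
  concat_blocks 0%nat (fun b => map (base_digit m b) (seq 0 (S b))).

Lemma universal_seq_contains_words (m : nat) (w : nat -> nat) (l N : nat) :
  m <> 0%nat -> (forall u, w u < m)%nat ->
  exists p, (N <= p)%nat /\ forall t, (t < l)%nat -> universal_seq m (p + t) = w t.
Proof.
  intros m_neq0 w_lt.
  set (block := fun b => map (base_digit m b) (seq 0 (S b))).
  assert (block_nonnil : forall b, block b <> nil) by (intros b; discriminate).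
  set (b := (base_code m w l + m ^ l * (l + N))%nat).
  assert (b_ge : (l + N <= b)%nat).
  { assert (1 <= m ^ l)%nat by (apply Nat.neq_0_lt_0, Nat.pow_nonzero, m_neq0).
    unfold b; nia. }
  exists (length (blocks_upto block b)); split.
  - pose proof (length_blocks_upto_ge block block_nonnil b); lia.
  - intros t t_lt; unfold universal_seq; fold block.
    rewrite (concat_blocks_block 0%nat block block_nonnil) by (unfold block; rewrite length_map, length_seq; lia).
    unfold block; rewrite nth_indep with (d' := base_digit m b 0)
      by (rewrite length_map, length_seq; lia).
    rewrite map_nth, seq_nth by lia; simpl.
    now apply base_digit_code.
Qed.

Lemma digit_eq (m : nat) (a b : digit m) : proj1_sig a = proj1_sig b -> a = b.
Proof.
  destruct a as [a a_lt], b as [b b_lt]; simpl; intros <-.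
  f_equal; apply le_unique.
Qed.

Definition digit_of_nat {m : nat} (m_neq0 : m <> 0%nat) (x : nat) : digit m :=
  exist _ (x mod m)%nat (Nat.mod_upper_bound x m m_neq0).

Lemma modular_transitive_universal (m : nat) : m <> 0%nat -> modular_transitive m.
Proof.
  intros m_neq0.
  exists (fun n => digit_of_nat m_neq0 (universal_seq m n)).
  intros s j l j_ge1.
  destruct (universal_seq_contains_words m (fun t => proj1_sig (s t)) l 1 m_neq0)
    as [p [p_ge1 Ep]]; [intro u; exact (proj2_sig (s u))|].
  exists p, (j + p)%nat; repeat split; [lia | lia |].
  intros t t_lt; apply digit_eq; simpl.
  rewrite Ep by exact t_lt; apply Nat.mod_small, (proj2_sig (s t)).
Qed.

Lemma modular_dense_periodic_all (m : nat) : modular_dense_periodic m.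
Proof.
  intros k s l m' _ m'_le.
  set (a := (k - m')%nat); set (P := (a + l + 1)%nat).
  exists (fun n => s ((n mod P) - a)%nat); split.
  - exists P; split; [lia|]; intros n; simpl.
    replace (n + P)%nat with (n + 1 * P)%nat by lia.
    now rewrite Nat.Div0.mod_add.
  - split; [simpl; lia|]; intros t t_lt; simpl; f_equal.
    rewrite Nat.mod_small by lia; lia.
Qed.

Lemma iter_phi (m k : nat) (x : point m) :
  Nat.iter k phi x = ((fst x + k)%nat, fun n => snd x (k + n)%nat).
Proof.
  induction k as [|k IH]; simpl Nat.iter.
  - destruct x as [j i]; simpl; now rewrite Nat.add_0_r.
  - rewrite IH; unfold phi; simpl; f_equal; [lia|].
    apply functional_extensionality; intros n; f_equal; lia.
Qed.

Definition splice {m : nat} (k : nat) (a b : lab_seq m) : lab_seq m :=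
  fun t => if Nat.ltb t k then a t else b (t - k)%nat.

Lemma agree_splice {m : nat} (k : nat) (a b : lab_seq m) : agree k a (splice k a b).
Proof.
  intros t t_lt; unfold splice; destruct (Nat.ltb_spec t k); [reflexivity | lia].
Qed.

Lemma splice_shift {m : nat} (k t : nat) (a b : lab_seq m) :
  splice k a b (k + t)%nat = b t.
Proof.
  unfold splice; destruct (Nat.ltb_spec (k + t) k); [lia|]; f_equal; lia.
Qed.

Lemma modular_sensitive_of_structure {m : nat}
    (dl : nat -> lab_seq m -> lab_seq m -> R) :
  modular_chaotic_structure dl -> modular_sensitive dl.
Proof.
  intros [diam [eps0 [sep [c [c_pos c_le]]]]].
  exists (c / 2); split; [lra|].
  intros j i kappa j_ge1 kappa_pos.
  destruct (diam j j_ge1 (kappa / 2)) as [N diamN]; [lra|].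
  set (k := S N).
  destruct (sep (j + k)%nat) as [_ [n sep_n]]; [lia|].
  destruct (sep_n (fun t => i (k + t)%nat)) as [w' far].
  exists (splice k i w'), k; split; [lia|]; split.
  - assert (near : dl j i (splice k i w') <= kappa / 2).
    { apply (diamN k ltac:(lia) i); [intros t _; reflexivity | apply agree_splice]. }
    unfold pdelta; cbn [fst snd]; lra.
  - rewrite !iter_phi; unfold pdelta; cbn [fst snd].
    assert (apart : eps0 (j + k)%nat <=
      dl (j + k)%nat (fun t => i (k + t)%nat) (fun t => splice k i w' (k + t)%nat)).
    { apply far; intros t _; [reflexivity | symmetry; apply splice_shift]. }
    pose proof (c_le (j + k)%nat ltac:(lia)); lra.
Qed.

Theorem theorem1 (m : nat) (Hm : (2 <= m)%nat)
  (F : nat -> Type) (d : forall j, F j -> F j -> R)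
  (lab : forall j, lab_seq m -> F j)
  (Hmet : forall j, (1 <= j)%nat -> is_metric (d j))
  (Hpres : forall j, (1 <= j)%nat -> is_presentation (lab j))
  (Hstruct : modular_chaotic_structure (delta F d lab)) :
  modular_Devaney_chaotic m (delta F d lab).
Proof.
  split; [|split].
  - apply modular_transitive_universal; lia.
  - apply modular_dense_periodic_all.
  - now apply modular_sensitive_of_structure.
Qed.
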